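(* Let $G\in\Gamma_0(\mathbb{R}_+)$ and let $H=H_G$ be its marginal perspective function; assume $H$ is finite on $[0,\infty)^2$ and $H(u,1)>0$ for all $u\in[0,1)$. Let $a\in(0,1]$. If the function $$h(u):=\frac{(1-u^a)^{1/a}}{H(u,1)}$$ is decreasing on $[0,1)$, then $H^a$ satisfies the triangle inequality on $[0,+\infty)$, i.e. $H^a(x,z)\le H^a(x,y)+H^a(y,z)$ for all $x,y,z\ge 0$.
   Context: $\Gamma_0(\mathbb{R}_+)$ is the set of functions $F:[0,\infty)\to[0,\infty]$ that are convex, lower semicontinuous, with $F(1)=0$. For $F\in\Gamma_0(\mathbb{R}_+)$: the recession function is $\mathrm{rec}(F)(r)=\lim_{\alpha\to\infty}F(1+\alpha r)/\alpha$; the perspective function is $\hat F(r,t)=tF(r/t)$ for $t>0$ and $\hat F(r,0)=\mathrm{rec}(F)(r)$. The marginal perspective function $H_F:[0,\infty)^2\to[0,\infty]$ is the lower semicontinuous envelope of $\tilde H_F(r_1,r_2)=\inf_{\theta>0}[\hat F(\theta,r_1)+\hat F(\theta,r_2)]$; it is symmetric, jointly convex, positively $1$-homogeneous and vanishes on the diagonal. ''Decreasing'' means non-increasing. *)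

From Stdlib Require Import Reals Lra ClassicalEpsilon.
Open Scope R_scope.

Inductive ereal : Type := Fin (x : R) | PInf.

Definition ele (x y : ereal) : Prop :=
  match x, y with
  | _, PInf => True
  | PInf, Fin _ => False
  | Fin a, Fin b => a <= b
  end.
Definition elt (x y : ereal) : Prop := ele x y /\ x <> y.

Definition eadd (x y : ereal) : ereal :=
  match x, y with Fin a, Fin b => Fin (a + b) | _, _ => PInf end.

(* multiplication by a (strictly positive) real scalar t: t * (+oo) = +oo *)
Definition escale (t : R) (x : ereal) : ereal :=
  match x with Fin a => Fin (t * a) | PInf => PInf end.

(* real part of a finite extended real (junk value 0 at +oo) *)
Definition ereal_real (x : ereal) : R :=
  match x with Fin a => a | PInf => 0 end.

Definition is_esup (S : ereal -> Prop) (l : ereal) : Prop :=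
  (forall x, S x -> ele x l) /\ (forall u, (forall x, S x -> ele x u) -> ele l u).
Definition is_einf (S : ereal -> Prop) (l : ereal) : Prop :=
  (forall x, S x -> ele l x) /\ (forall u, (forall x, S x -> ele u x) -> ele u l).
Definition esup (S : ereal -> Prop) : ereal := epsilon (inhabits PInf) (is_esup S).
Definition einf (S : ereal -> Prop) : ereal := epsilon (inhabits PInf) (is_einf S).

Definition ecv_infty (f : R -> ereal) (l : ereal) : Prop :=
  match l with
  | Fin L => forall eps, eps > 0 -> exists M, forall al, al > M ->
               exists v, f al = Fin v /\ Rabs (v - L) < eps
  | PInf => forall K, exists M, forall al, al > M -> elt (Fin K) (f al)
  end.

Definition nonneg_valued (F : R -> ereal) : Prop :=
  forall x, 0 <= x -> ele (Fin 0) (F x).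
Definition convex_on_Rplus (F : R -> ereal) : Prop :=
  forall x y t, 0 <= x -> 0 <= y -> 0 < t < 1 ->
    ele (F (t * x + (1 - t) * y)) (eadd (escale t (F x)) (escale (1 - t) (F y))).
Definition lsc_on_Rplus (F : R -> ereal) : Prop :=
  forall x, 0 <= x -> forall c, elt (Fin c) (F x) ->
    exists d, d > 0 /\ forall y, 0 <= y -> Rabs (y - x) < d -> elt (Fin c) (F y).
Definition Gamma0 (F : R -> ereal) : Prop :=
  nonneg_valued F /\ convex_on_Rplus F /\ lsc_on_Rplus F /\ F 1 = Fin 0.

Definition recF (F : R -> ereal) (r : R) : ereal :=
  epsilon (inhabits PInf) (ecv_infty (fun al => escale (/ al) (F (1 + al * r)))).

Definition persp (F : R -> ereal) (r t : R) : ereal :=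
  if Rlt_dec 0 t then escale t (F (r / t)) else recF F r.

Definition Htilde (F : R -> ereal) (r1 r2 : R) : ereal :=
  einf (fun v => exists th, th > 0 /\ v = eadd (persp F th r1) (persp F th r2)).

Definition lsc2 (g : R -> R -> ereal) : Prop :=
  forall p1 p2, 0 <= p1 -> 0 <= p2 -> forall c, elt (Fin c) (g p1 p2) ->
    exists d, d > 0 /\ forall q1 q2, 0 <= q1 -> 0 <= q2 ->
      Rabs (q1 - p1) < d -> Rabs (q2 - p2) < d -> elt (Fin c) (g q1 q2).

(* marginal perspective H_F: lower semicontinuous envelope of Htilde on [0,+oo)^2,
   i.e. the pointwise supremum of all lsc minorants of Htilde *)
Definition HF (F : R -> ereal) (r1 r2 : R) : ereal :=
  esup (fun v => exists g : R -> R -> ereal, lsc2 g /\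
          (forall q1 q2, 0 <= q1 -> 0 <= q2 -> ele (g q1 q2) (Htilde F q1 q2)) /\
          v = g r1 r2).

(* real power x^y for x >= 0, y > 0, with 0^y = 0 *)
Definition rpow (x y : R) : R := if Rle_dec x 0 then 0 else Rpower x y.

From Stdlib Require Import Reals Lra Classical ClassicalEpsilon.
Open Scope R_scope.

(* [H = HF G] is symmetric, positively 1-homogeneous and convex with [H(1,1) = 0],
   so [f(u) = H(u,1)] is nonincreasing on [[0,1]] and [H(x,y) = y f(x/y)].  By symmetry
   and homogeneity it suffices to compare [H(x,z)] with [H(x,y) + H(y,z)] for [x <= z];
   when [y] lies outside [[x,z]] the monotonicity of [f] already bounds [H(x,z)] by one
   of the two terms.  For [x < y < z] put [u = x/z], [v = y/z], [w = u/v].  The decrease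
   of [h] gives [(1 - v^a) f(u)^a <= (1 - u^a) f(v)^a] and
   [(1 - w^a) f(u)^a <= (1 - u^a) f(w)^a]; since [u^a = w^a v^a], adding the first to
   [v^a] times the second yields [f(u)^a <= v^a f(w)^a + f(v)^a], which is the triangle
   inequality after scaling by [z^a].  The monotonicity of [f] at [u = 0] is the one
   place where the recession function enters. *)

(** * Order and bounds in the extended reals *)

Lemma ele_refl x : ele x x.
Proof. destruct x; simpl; lra. Qed.

Lemma ele_trans x y z : ele x y -> ele y z -> ele x z.
Proof. destruct x, y, z; simpl; intros; try lra; tauto. Qed.

Lemma ele_PInf x : ele x PInf.
Proof. destruct x; simpl; auto. Qed.

Lemma ele_total x y : ele x y \/ ele y x.
Proof. destruct x, y; simpl; try lra; tauto. Qed.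

Lemma elt_Fin a b : elt (Fin a) (Fin b) <-> a < b.
Proof.
  unfold elt; simpl; split.
  - intros [H1 H2]. destruct (Req_dec a b); [subst; tauto | lra].
  - intros H; split; [lra | intro E; inversion E; lra].
Qed.

Lemma elt_Fin_PInf a : elt (Fin a) PInf.
Proof. split; simpl; auto; discriminate. Qed.

Lemma elt_not_ele x y : elt x y -> ~ ele y x.
Proof.
  unfold elt; destruct x as [a|], y as [b|]; simpl; intros [H1 H2] H3; try tauto.
  apply H2; f_equal; lra.
Qed.

Lemma enot_lt_le x y : ~ elt x y -> ele y x.
Proof.
  intros H. destruct (ele_total y x) as [|Hxy]; auto.
  destruct (classic (x = y)) as [->|Hne]; [apply ele_refl|].
  exfalso; apply H; split; auto.
Qed.

Lemma elt_ele_trans x y z : elt x y -> ele y z -> elt x z.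
Proof.
  intros H1 H2. apply NNPP; intro H.
  apply (elt_not_ele x y H1), (ele_trans _ z); auto using enot_lt_le.
Qed.

Lemma ele_of_forall_eps x c :
  (forall eps, 0 < eps -> ele x (Fin (c + eps))) -> ele x (Fin c).
Proof.
  intros H. destruct x as [v|]; simpl.
  - apply Rle_plus_epsilon. intros eps He. exact (H eps He).
  - exact (H 1 Rlt_0_1).
Qed.

Lemma escale_mono t x y : 0 < t -> ele x y -> ele (escale t x) (escale t y).
Proof. intros Ht; destruct x, y; simpl; auto; intros; nra. Qed.

Lemma eadd_mono x y x' y' : ele x x' -> ele y y' -> ele (eadd x y) (eadd x' y').
Proof. destruct x, y, x', y'; simpl; auto; intros; try lra; tauto. Qed.

Lemma eadd_comm x y : eadd x y = eadd y x.
Proof. destruct x, y; simpl; auto. f_equal; ring. Qed.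

Lemma eadd_interchange x y z w : eadd (eadd x y) (eadd z w) = eadd (eadd x z) (eadd y w).
Proof. destruct x, y, z, w; simpl; auto. f_equal; ring. Qed.

Lemma escale_eadd t x y : escale t (eadd x y) = eadd (escale t x) (escale t y).
Proof. destruct x, y; simpl; auto. f_equal; ring. Qed.

Lemma escale_escale s t x : escale s (escale t x) = escale (s * t) x.
Proof. destruct x; simpl; auto. f_equal; ring. Qed.

Lemma escale_1 x : escale 1 x = x.
Proof. destruct x; simpl; auto. f_equal; ring. Qed.

Lemma einf_spec (S : ereal -> Prop) :
  (forall x, S x -> ele (Fin 0) x) -> is_einf S (einf S).
Proof.
  intros Hlb. unfold einf. apply epsilon_spec.
  destruct (classic (exists v, S (Fin v))) as [[v Hv]|Hno].
  - set (E := fun y => S (Fin (- y))).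
    assert (Hb : bound E).
    { exists 0. intros y Hy. specialize (Hlb _ Hy). simpl in Hlb. lra. }
    assert (Hne : exists y, E y). { exists (- v). unfold E. rewrite Ropp_involutive. auto. }
    destruct (completeness E Hb Hne) as [m [Hm1 Hm2]].
    exists (Fin (- m)). split.
    + intros [w|] Hx; simpl; auto.
      assert (Hw : E (- w)) by (unfold E; rewrite Ropp_involutive; auto).
      specialize (Hm1 _ Hw). lra.
    + intros [w|] Hu; simpl.
      * assert (m <= - w); [|lra].
        apply Hm2. intros y Hy. specialize (Hu _ Hy). simpl in Hu. lra.
      * exact (Hu _ Hv).
  - exists PInf. split.
    + intros [w|] Hx; simpl; auto. exfalso; eauto.
    + intros u _. apply ele_PInf.
Qed.

Lemma esup_spec (S : ereal -> Prop) : (exists x, S x) -> is_esup S (esup S).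
Proof.
  intros [x0 Hx0]. unfold esup. apply epsilon_spec.
  destruct (classic (exists K, forall x, S x -> ele x (Fin K))) as [[K HK]|Hunb].
  - assert (Hfin : forall x, S x -> exists v, x = Fin v).
    { intros [v|] Hx; eauto. specialize (HK _ Hx). contradiction. }
    destruct (Hfin _ Hx0) as [v0 ->].
    destruct (completeness (fun y => S (Fin y)) (ex_intro _ K (fun y Hy => HK _ Hy))
                (ex_intro _ v0 Hx0)) as [m [Hm1 Hm2]].
    exists (Fin m). split.
    + intros x Hx. destruct (Hfin _ Hx) as [v ->]. exact (Hm1 _ Hx).
    + intros [w|] Hu; simpl; auto. apply Hm2. intros y Hy. exact (Hu _ Hy).
  - exists PInf. split.
    + intros x _. apply ele_PInf.
    + intros [w|] Hu; simpl; auto. apply Hunb. eauto.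
Qed.

(** * Limits at infinity and the recession function *)

Lemma Rmax_succ_gt M1 M2 : M1 < Rmax M1 M2 + 1 /\ M2 < Rmax M1 M2 + 1.
Proof. pose proof (Rmax_l M1 M2); pose proof (Rmax_r M1 M2); lra. Qed.

Lemma ecv_infty_monotone (f : R -> ereal) :
  (forall al be, 0 < al <= be -> ele (f al) (f be)) -> exists l, ecv_infty f l.
Proof.
  intros Hf. set (S v := exists al, 0 < al /\ v = f al).
  destruct (esup_spec S) as [Hub Hlub]; [exists (f 1), 1; split; [lra | auto]|].
  assert (Happrox : forall c, elt (Fin c) (esup S) ->
            exists al, 0 < al /\ elt (Fin c) (f al)).
  { intros c Hc. apply NNPP; intro Hno. apply (elt_not_ele _ _ Hc), Hlub.
    intros x [al [Hal ->]]. apply enot_lt_le. eauto. }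
  assert (Hbound : forall al, 0 < al -> ele (f al) (esup S)).
  { intros al Hal. apply Hub. exists al; auto. }
  exists (esup S). destruct (esup S) as [L|]; simpl.
  - intros eps Heps.
    destruct (Happrox (L - eps)) as [al1 [Hal1 Hlow]]; [apply elt_Fin; lra|].
    exists al1. intros al Hal.
    pose proof (elt_ele_trans _ _ _ Hlow (Hf al1 al ltac:(lra))) as Hgt.
    pose proof (Hbound al ltac:(lra)) as Hle.
    destruct (f al) as [v|]; [|contradiction].
    apply elt_Fin in Hgt. simpl in Hle. exists v; split; auto. apply Rabs_def1; lra.
  - intros K. destruct (Happrox K (elt_Fin_PInf K)) as [al1 [Hal1 Hlow]].
    exists al1. intros al Hal. apply (elt_ele_trans _ _ _ Hlow), Hf. lra.
Qed.

Lemma ecv_infty_unique f l1 l2 : ecv_infty f l1 -> ecv_infty f l2 -> l1 = l2.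
Proof.
  assert (Hfin_inf : forall L, ~ (ecv_infty f (Fin L) /\ ecv_infty f PInf)).
  { intros L [H1 H2]. destruct (H1 1 Rlt_0_1) as [M1 HM1]. destruct (H2 (L + 1)) as [M2 HM2].
    destruct (Rmax_succ_gt M1 M2) as [h1 h2].
    destruct (HM1 _ h1) as [v [E Hv]]. specialize (HM2 _ h2). rewrite E, elt_Fin in HM2.
    apply Rabs_def2 in Hv. lra. }
  intros H1 H2. destruct l1 as [L1|], l2 as [L2|]; auto.
  - f_equal. apply Rle_antisym; apply Rle_plus_epsilon; intros eps He.
    all:
      destruct (H1 (eps / 2) ltac:(lra)) as [M1 HM1];
      destruct (H2 (eps / 2) ltac:(lra)) as [M2 HM2];
      destruct (Rmax_succ_gt M1 M2) as [h1 h2];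
      destruct (HM1 _ h1) as [v1 [E1 Hv1]]; destruct (HM2 _ h2) as [v2 [E2 Hv2]];
      rewrite E1 in E2; injection E2 as ->;
      apply Rabs_def2 in Hv1; apply Rabs_def2 in Hv2; lra.
  - destruct (Hfin_inf L1); auto.
  - destruct (Hfin_inf L2); auto.
Qed.

Lemma ecv_infty_ge f l B : ecv_infty f l ->
  (exists M, forall al, al > M -> ele (Fin B) (f al)) -> ele (Fin B) l.
Proof.
  intros Hl [M HM]. destruct l as [L|]; simpl; auto.
  apply Rnot_lt_le; intro Hlt. destruct (Hl (B - L) ltac:(lra)) as [M1 HM1].
  destruct (Rmax_succ_gt M M1) as [h h1].
  destruct (HM1 _ h1) as [v [E Hv]]. specialize (HM _ h). rewrite E in HM. simpl in HM.
  apply Rabs_def2 in Hv. lra.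
Qed.

Lemma ecv_infty_ext_pos f g l : (forall al, 0 < al -> f al = g al) ->
  ecv_infty f l -> ecv_infty g l.
Proof.
  intros Hext Hl. destruct l as [L|]; simpl in *.
  - intros eps He. destruct (Hl eps He) as [M HM]. exists (Rmax M 0). intros al Hal.
    pose proof (Rmax_l M 0); pose proof (Rmax_r M 0).
    rewrite <- Hext by lra. apply HM. lra.
  - intros K. destruct (Hl K) as [M HM]. exists (Rmax M 0). intros al Hal.
    pose proof (Rmax_l M 0); pose proof (Rmax_r M 0).
    rewrite <- Hext by lra. apply HM. lra.
Qed.

Lemma ecv_infty_rescale f l t : 0 < t ->
  ecv_infty f l -> ecv_infty (fun al => escale t (f (al * t))) (escale t l).
Proof.
  intros Ht Hl.
  assert (Hslow : forall M al, al > M / t -> al * t > M).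
  { intros M al Hal. apply (Rmult_lt_compat_r t) in Hal; auto.
    replace (M / t * t) with M in Hal by (field; lra). lra. }
  destruct l as [L|]; simpl in *.
  - intros eps Heps. destruct (Hl (eps / t) ltac:(apply Rdiv_lt_0_compat; lra)) as [M HM].
    exists (M / t). intros al Hal. destruct (HM _ (Hslow _ _ Hal)) as [v [-> Hv]].
    exists (t * v); split; auto.
    replace (t * v - t * L) with (t * (v - L)) by ring.
    rewrite Rabs_mult, (Rabs_right t) by lra.
    apply (Rmult_lt_compat_l t) in Hv; auto. replace (t * (eps / t)) with eps in Hv by (field; lra).
    exact Hv.
  - intros K. destruct (Hl (K / t)) as [M HM]. exists (M / t). intros al Hal.
    specialize (HM _ (Hslow _ _ Hal)).
    destruct (f (al * t)) as [v|]; simpl; [|apply elt_Fin_PInf].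
    apply elt_Fin in HM. apply elt_Fin.
    apply (Rmult_lt_compat_l t) in HM; auto. replace (t * (K / t)) with K in HM by (field; lra).
    exact HM.
Qed.

Section Recession.
Variable G : R -> ereal.
Hypothesis HG : Gamma0 G.

Lemma Gamma0_Fin_nonneg x g : 0 <= x -> G x = Fin g -> 0 <= g.
Proof.
  intros Hx E. destruct HG as [Hn _]. specialize (Hn x Hx). rewrite E in Hn. exact Hn.
Qed.

Definition rec_quotient (th al : R) : ereal := escale (/ al) (G (1 + al * th)).

(* Convexity and [G 1 = 0] give [G (1 + al th) <= (al / be) G (1 + be th)]. *)
Lemma rec_quotient_monotone th al be : 0 <= th -> 0 < al <= be ->
  ele (rec_quotient th al) (rec_quotient th be).
Proof.
  intros Hth Hal. destruct (Req_dec al be) as [<-|Hne]; [apply ele_refl|].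
  destruct HG as [_ [Hconv [_ H1]]].
  set (t := al / be).
  assert (Ht : 0 < t < 1).
  { unfold t; split; [apply Rdiv_lt_0_compat; lra|].
    apply (Rmult_lt_reg_r be); [lra|]. field_simplify; lra. }
  specialize (Hconv (1 + be * th) 1 t ltac:(nra) ltac:(lra) Ht).
  replace (t * (1 + be * th) + (1 - t) * 1) with (1 + al * th) in Hconv
    by (unfold t; field; lra).
  rewrite H1 in Hconv. unfold rec_quotient.
  destruct (G (1 + be * th)) as [gb|]; [|apply ele_PInf].
  destruct (G (1 + al * th)) as [ga|]; simpl in Hconv |- *; [|contradiction].
  replace (/ be * gb) with (/ al * (t * gb)) by (unfold t; field; lra).
  apply Rmult_le_compat_l; [left; apply Rinv_0_lt_compat|]; lra.
Qed.

Lemma rec_quotient_nonneg th al : 0 <= th -> 0 < al -> ele (Fin 0) (rec_quotient th al).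
Proof.
  intros Hth Hal. unfold rec_quotient.
  destruct (G (1 + al * th)) as [g|] eqn:Eg; simpl; auto.
  apply Rmult_le_pos; [left; apply Rinv_0_lt_compat; lra|].
  apply (Gamma0_Fin_nonneg (1 + al * th) g ltac:(nra) Eg).
Qed.

Lemma recF_spec th : 0 <= th -> ecv_infty (rec_quotient th) (recF G th).
Proof.
  intros Hth. unfold recF. apply epsilon_spec, ecv_infty_monotone.
  intros al be Hab. apply rec_quotient_monotone; auto.
Qed.

Lemma recF_nonneg th : 0 <= th -> ele (Fin 0) (recF G th).
Proof.
  intros Hth. apply (ecv_infty_ge _ _ _ (recF_spec th Hth)).
  exists 0. intros al Hal. apply rec_quotient_nonneg; lra.
Qed.

Lemma recF_scale th t : 0 <= th -> 0 < t -> recF G (t * th) = escale t (recF G th).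
Proof.
  intros Hth Ht. apply (ecv_infty_unique (rec_quotient (t * th))).
  { apply recF_spec. nra. }
  apply (ecv_infty_ext_pos (fun al => escale t (rec_quotient th (al * t)))).
  - intros al Hal. unfold rec_quotient. rewrite escale_escale.
    replace (t * / (al * t)) with (/ al) by (field; lra).
    replace (1 + al * t * th) with (1 + al * (t * th)) by ring. reflexivity.
  - apply ecv_infty_rescale; auto. apply recF_spec; auto.
Qed.

(* For [al > 1 / eta] take [s = th / (1 + al th) < eta]: then [th / s = 1 + al th] and
   [s <= 1 / al], so [rec_quotient th al >= s G (th / s) >= B]. *)
Lemma recF_ge th B eta : 0 < th -> 0 < eta ->
  (forall s, 0 < s < eta -> ele (Fin B) (escale s (G (th / s)))) ->
  ele (Fin B) (recF G th).
Proof.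
  intros Hth Heta HB. apply (ecv_infty_ge _ _ _ (recF_spec th ltac:(lra))).
  exists (/ eta). intros al Hal.
  assert (Hal0 : 0 < al) by (pose proof (Rinv_0_lt_compat eta Heta); lra).
  set (s := th / (1 + al * th)).
  assert (Hs_le : s <= / al).
  { unfold s. apply (Rmult_le_reg_r (al * (1 + al * th))); [nra|].
    field_simplify; nra. }
  assert (Hs : 0 < s < eta).
  { split; [apply Rdiv_lt_0_compat; nra|].
    apply Rinv_lt_contravar in Hal; [rewrite Rinv_inv in Hal; lra|].
    apply Rmult_lt_0_compat; [apply Rinv_0_lt_compat|]; lra. }
  specialize (HB s Hs). replace (th / s) with (1 + al * th) in HB by (unfold s; field; nra).
  unfold rec_quotient. destruct (G (1 + al * th)) as [g|] eqn:Eg; simpl in *; auto.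
  pose proof (Gamma0_Fin_nonneg (1 + al * th) g ltac:(nra) Eg). nra.
Qed.

End Recession.

(** * The perspective and its marginal [Htilde] *)

Section Perspective.
Variable G : R -> ereal.
Hypothesis HG : Gamma0 G.

Lemma persp_pos th r : 0 < r -> persp G th r = escale r (G (th / r)).
Proof. intros Hr. unfold persp. destruct (Rlt_dec 0 r); [auto | lra]. Qed.

Lemma persp_0 th : persp G th 0 = recF G th.
Proof. unfold persp. destruct (Rlt_dec 0 0); [lra | auto]. Qed.

Lemma persp_nonneg th r : 0 <= th -> 0 <= r -> ele (Fin 0) (persp G th r).
Proof.
  intros Hth Hr. destruct (Rle_lt_or_eq_dec 0 r Hr) as [Hr'|<-].
  - rewrite persp_pos by auto.
    destruct (G (th / r)) as [g|] eqn:Eg; simpl; auto.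
    apply Rmult_le_pos; [lra|]. apply (Gamma0_Fin_nonneg G HG (th / r)); auto.
    apply Rmult_le_pos; [lra | left; apply Rinv_0_lt_compat; lra].
  - rewrite persp_0. apply recF_nonneg; auto.
Qed.

Lemma persp_scale t th r : 0 < t -> 0 <= th -> 0 <= r ->
  persp G (t * th) (t * r) = escale t (persp G th r).
Proof.
  intros Ht Hth Hr. destruct (Rle_lt_or_eq_dec 0 r Hr) as [Hr'|<-].
  - rewrite !persp_pos by nra. rewrite escale_escale.
    replace (t * th / (t * r)) with (th / r) by (field; lra). reflexivity.
  - rewrite Rmult_0_r, !persp_0. apply recF_scale; auto.
Qed.

(* With [r = l r1 + (1 - l) r2] and [mu = l r1 / r] this is the convexity of [G] between
   [th1 / r1] and [th2 / r2] with weight [mu], multiplied by [r]. *)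
Lemma persp_convex l th1 th2 r1 r2 : 0 < l < 1 -> 0 <= th1 -> 0 <= th2 -> 0 < r1 -> 0 < r2 ->
  ele (persp G (l * th1 + (1 - l) * th2) (l * r1 + (1 - l) * r2))
      (eadd (escale l (persp G th1 r1)) (escale (1 - l) (persp G th2 r2))).
Proof.
  intros Hl H1 H2 H3 H4. set (r := l * r1 + (1 - l) * r2).
  assert (Hr : 0 < r) by (unfold r; nra).
  rewrite !persp_pos by auto.
  set (mu := l * r1 / r).
  assert (Hmu : 0 < mu < 1).
  { unfold mu; split; [apply Rdiv_lt_0_compat; nra|].
    apply (Rmult_lt_reg_r r); auto. unfold Rdiv. rewrite Rmult_assoc, Rinv_l by lra.
    unfold r; nra. }
  destruct HG as [_ [Hconv _]].
  assert (0 <= th1 / r1) by (apply Rmult_le_pos; [lra | left; apply Rinv_0_lt_compat; lra]).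
  assert (0 <= th2 / r2) by (apply Rmult_le_pos; [lra | left; apply Rinv_0_lt_compat; lra]).
  specialize (Hconv (th1 / r1) (th2 / r2) mu ltac:(auto) ltac:(auto) Hmu).
  replace (mu * (th1 / r1) + (1 - mu) * (th2 / r2)) with ((l * th1 + (1 - l) * th2) / r)
    in Hconv by (unfold mu, r; field; repeat split; nra).
  destruct (G (th1 / r1)) as [g1|], (G (th2 / r2)) as [g2|]; simpl in *; try apply ele_PInf.
  destruct (G ((l * th1 + (1 - l) * th2) / r)) as [g|]; simpl in *; [|contradiction].
  apply (Rmult_le_compat_l r) in Hconv; [|lra].
  replace (r * (mu * g1 + (1 - mu) * g2)) with (l * (r1 * g1) + (1 - l) * (r2 * g2))
    in Hconv by (unfold mu, r; field; nra).
  lra.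
Qed.

Definition persp_sum (r1 r2 th : R) : ereal := eadd (persp G th r1) (persp G th r2).

Lemma persp_sum_nonneg r1 r2 th : 0 <= r1 -> 0 <= r2 -> 0 <= th ->
  ele (Fin 0) (persp_sum r1 r2 th).
Proof.
  intros. unfold persp_sum.
  pose proof (persp_nonneg th r1 ltac:(auto) ltac:(auto)).
  pose proof (persp_nonneg th r2 ltac:(auto) ltac:(auto)).
  destruct (persp G th r1), (persp G th r2); simpl in *; auto. lra.
Qed.

Lemma persp_sum_convex l p1 p2 q1 q2 th1 th2 :
  0 < l < 1 -> 0 < p1 -> 0 < p2 -> 0 < q1 -> 0 < q2 -> 0 <= th1 -> 0 <= th2 ->
  ele (persp_sum (l * p1 + (1 - l) * q1) (l * p2 + (1 - l) * q2) (l * th1 + (1 - l) * th2))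
      (eadd (escale l (persp_sum p1 p2 th1)) (escale (1 - l) (persp_sum q1 q2 th2))).
Proof.
  intros. unfold persp_sum. rewrite !escale_eadd, eadd_interchange.
  apply eadd_mono; apply persp_convex; auto.
Qed.

Lemma Htilde_spec r1 r2 : 0 <= r1 -> 0 <= r2 ->
  is_einf (fun v => exists th, th > 0 /\ v = persp_sum r1 r2 th) (Htilde G r1 r2).
Proof.
  intros. apply einf_spec. intros x [th [Hth ->]]. apply persp_sum_nonneg; auto; lra.
Qed.

Lemma Htilde_le_persp_sum r1 r2 th : 0 <= r1 -> 0 <= r2 -> 0 < th ->
  ele (Htilde G r1 r2) (persp_sum r1 r2 th).
Proof. intros. apply (Htilde_spec r1 r2); auto. exists th; auto. Qed.

Lemma Htilde_ge r1 r2 u : 0 <= r1 -> 0 <= r2 ->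
  (forall th, 0 < th -> ele u (persp_sum r1 r2 th)) -> ele u (Htilde G r1 r2).
Proof. intros. apply (Htilde_spec r1 r2); auto. intros x [th [Hth ->]]; auto. Qed.

Lemma Htilde_nonneg r1 r2 : 0 <= r1 -> 0 <= r2 -> ele (Fin 0) (Htilde G r1 r2).
Proof. intros. apply Htilde_ge; auto. intros. apply persp_sum_nonneg; auto; lra. Qed.

Lemma Htilde_sym r1 r2 : 0 <= r1 -> 0 <= r2 -> ele (Htilde G r1 r2) (Htilde G r2 r1).
Proof.
  intros. apply Htilde_ge; auto. intros th Hth. unfold persp_sum. rewrite eadd_comm.
  apply Htilde_le_persp_sum; auto.
Qed.

Lemma Htilde_scale t r1 r2 : 0 < t -> 0 <= r1 -> 0 <= r2 ->
  ele (escale t (Htilde G r1 r2)) (Htilde G (t * r1) (t * r2)).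
Proof.
  intros Ht H1 H2. apply Htilde_ge; try nra. intros th Hth.
  assert (Hth' : 0 < th / t) by (apply Rdiv_lt_0_compat; lra).
  replace th with (t * (th / t)) by (field; lra).
  unfold persp_sum. rewrite !persp_scale, <- escale_eadd by (auto; lra).
  apply escale_mono; auto. apply Htilde_le_persp_sum; auto.
Qed.

Lemma Htilde_1_1 : ele (Htilde G 1 1) (Fin 0).
Proof.
  apply (ele_trans _ (persp_sum 1 1 1)); [apply Htilde_le_persp_sum; lra|].
  unfold persp_sum. rewrite persp_pos by lra. destruct HG as [_ [_ [_ H1]]].
  replace (1 / 1) with 1 by field. rewrite H1. simpl. lra.
Qed.

Lemma Htilde_near r1 r2 A eps : 0 <= r1 -> 0 <= r2 -> Htilde G r1 r2 = Fin A -> 0 < eps ->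
  exists th, 0 < th /\ ele (persp_sum r1 r2 th) (Fin (A + eps)).
Proof.
  intros H1 H2 E He. apply NNPP. intro Hno.
  assert (Hge : ele (Fin (A + eps)) (Htilde G r1 r2)).
  { apply Htilde_ge; auto. intros th Hth. apply enot_lt_le. intros [Hlt _].
    apply Hno. eauto. }
  rewrite E in Hge. simpl in Hge. lra.
Qed.

Lemma Htilde_convex l p1 p2 q1 q2 : 0 < l < 1 -> 0 < p1 -> 0 < p2 -> 0 < q1 -> 0 < q2 ->
  ele (Htilde G (l * p1 + (1 - l) * q1) (l * p2 + (1 - l) * q2))
      (eadd (escale l (Htilde G p1 p2)) (escale (1 - l) (Htilde G q1 q2))).
Proof.
  intros Hl Hp1 Hp2 Hq1 Hq2.
  destruct (Htilde G p1 p2) as [A|] eqn:EA; [|apply ele_PInf].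
  destruct (Htilde G q1 q2) as [B|] eqn:EB; [|destruct (escale l (Fin A)); apply ele_PInf].
  simpl. replace (l * A + (1 - l) * B) with (l * A + (1 - l) * B + 0) by ring.
  apply ele_of_forall_eps. intros eps He.
  destruct (Htilde_near p1 p2 A eps ltac:(lra) ltac:(lra) EA He) as [th1 [Ht1 C1]].
  destruct (Htilde_near q1 q2 B eps ltac:(lra) ltac:(lra) EB He) as [th2 [Ht2 C2]].
  eapply ele_trans; [apply (Htilde_le_persp_sum _ _ (l * th1 + (1 - l) * th2)); nra|].
  eapply ele_trans; [apply persp_sum_convex; auto; lra|].
  eapply ele_trans; [apply eadd_mono; apply escale_mono; [lra | exact C1 | lra | exact C2]|].
  simpl. nra.
Qed.

(* At the boundary [r1 = 0] the perspective is the recession function, and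
   [recF_ge] lets lower bounds on [Htilde G s r2] for small [s > 0] pass to it. *)
Lemma Htilde_0_ge r2 c eta : 0 < r2 -> 0 < eta ->
  (forall s, 0 < s < eta -> ele (Fin c) (Htilde G s r2)) -> ele (Fin c) (Htilde G 0 r2).
Proof.
  intros Hr2 Heta Hnear. apply Htilde_ge; try lra. intros th Hth. unfold persp_sum.
  rewrite persp_0, (persp_pos th r2 Hr2).
  destruct (G (th / r2)) as [g|] eqn:Eg; [|destruct (recF G th); apply ele_PInf].
  assert (Hrec : ele (Fin (c - r2 * g)) (recF G th)).
  { apply (recF_ge G HG th _ eta Hth Heta). intros s Hs.
    pose proof (ele_trans _ _ _ (Hnear s Hs)
                  (Htilde_le_persp_sum s r2 th ltac:(lra) ltac:(lra) Hth)) as Hsum.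
    unfold persp_sum in Hsum. rewrite (persp_pos th s), (persp_pos th r2 Hr2), Eg in Hsum by lra.
    destruct (G (th / s)); simpl in *; auto. lra. }
  destruct (recF G th); simpl in *; auto. lra.
Qed.

End Perspective.

(** * The lower semicontinuous envelope [HF] *)

Lemma Rabs_sub_lt_compose q p r d : Rabs (q - p) < d - Rabs (p - r) -> Rabs (q - r) < d.
Proof.
  intros H. replace (q - r) with ((q - p) + (p - r)) by ring.
  eapply Rle_lt_trans; [apply Rabs_triang | lra].
Qed.

Definition box_step (r1 r2 d c : R) : R -> R -> ereal :=
  fun q1 q2 => if Rlt_dec (Rabs (q1 - r1)) d then
                 if Rlt_dec (Rabs (q2 - r2)) d then Fin c else Fin 0
               else Fin 0.

Lemma box_step_lsc r1 r2 d c : 0 <= c -> lsc2 (box_step r1 r2 d c).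
Proof.
  intros Hc p1 p2 _ _ c0 Hc0. unfold box_step in *.
  destruct (Rlt_dec (Rabs (p1 - r1)) d) as [h1|h1];
    [destruct (Rlt_dec (Rabs (p2 - r2)) d) as [h2|h2]|].
  2, 3: apply elt_Fin in Hc0; exists 1; split; [lra|]; intros q1 q2 _ _ _ _;
        repeat destruct (Rlt_dec _ _); apply elt_Fin; lra.
  exists (Rmin (d - Rabs (p1 - r1)) (d - Rabs (p2 - r2))).
  split; [apply Rmin_case; lra|]. intros q1 q2 _ _ Hq1 Hq2.
  pose proof (Rmin_l (d - Rabs (p1 - r1)) (d - Rabs (p2 - r2))).
  pose proof (Rmin_r (d - Rabs (p1 - r1)) (d - Rabs (p2 - r2))).
  destruct (Rlt_dec (Rabs (q1 - r1)) d) as [k1|k1];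
    [|exfalso; apply k1; apply (Rabs_sub_lt_compose q1 p1); lra].
  destruct (Rlt_dec (Rabs (q2 - r2)) d) as [k2|k2];
    [exact Hc0 | exfalso; apply k2; apply (Rabs_sub_lt_compose q2 p2); lra].
Qed.

Definition near_box (r1 r2 d s1 s2 : R) : Prop :=
  0 <= s1 /\ 0 <= s2 /\ Rabs (s1 - r1) < d /\ Rabs (s2 - r2) < d.

Lemma near_box_center r1 r2 d : 0 <= r1 -> 0 <= r2 -> 0 < d -> near_box r1 r2 d r1 r2.
Proof. intros. unfold near_box. rewrite !Rminus_diag, Rabs_R0. auto. Qed.

Lemma near_box_pos r1 r2 d s1 s2 : near_box r1 r2 d s1 s2 -> d <= r1 -> d <= r2 ->
  0 < s1 /\ 0 < s2.
Proof. intros [_ [_ [h1 h2]]] ? ?. apply Rabs_def2 in h1. apply Rabs_def2 in h2. lra. Qed.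

Lemma near_box_convex l p1 p2 q1 q2 s1 s2 t1 t2 d : 0 < l < 1 ->
  near_box p1 p2 d s1 s2 -> near_box q1 q2 d t1 t2 ->
  near_box (l * p1 + (1 - l) * q1) (l * p2 + (1 - l) * q2) d
           (l * s1 + (1 - l) * t1) (l * s2 + (1 - l) * t2).
Proof.
  intros Hl [a1 [a2 [a3 a4]]] [b1 [b2 [b3 b4]]].
  apply Rabs_def2 in a3, a4, b3, b4.
  repeat split; try nra; apply Rabs_def1; nra.
Qed.

Section Envelope.
Variable G : R -> ereal.
Hypothesis HG : Gamma0 G.

Lemma zero_lsc_minorant :
  lsc2 (fun _ _ => Fin 0) /\
  forall q1 q2, 0 <= q1 -> 0 <= q2 -> ele (Fin 0) (Htilde G q1 q2).
Proof.
  split.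
  - intros p1 p2 _ _ c Hc. exists 1; split; [lra | auto].
  - intros; apply Htilde_nonneg; auto.
Qed.

Lemma HF_ge_minorant g r1 r2 : lsc2 g ->
  (forall q1 q2, 0 <= q1 -> 0 <= q2 -> ele (g q1 q2) (Htilde G q1 q2)) ->
  ele (g r1 r2) (HF G r1 r2).
Proof.
  intros Hg Hmin. unfold HF. apply esup_spec; [|exists g; auto].
  exists (Fin 0), (fun _ _ => Fin 0). destruct zero_lsc_minorant. auto.
Qed.

Lemma HF_le_of_bound r1 r2 u :
  (forall g, lsc2 g -> (forall q1 q2, 0 <= q1 -> 0 <= q2 -> ele (g q1 q2) (Htilde G q1 q2)) ->
     ele (g r1 r2) u) ->
  ele (HF G r1 r2) u.
Proof.
  intros Hb. unfold HF. apply esup_spec.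
  - exists (Fin 0), (fun _ _ => Fin 0). destruct zero_lsc_minorant. auto.
  - intros x [g [Hg [Hmin ->]]]. auto.
Qed.

Definition Hreal (x y : R) : R := ereal_real (HF G x y).

Hypothesis Hfin : forall x y, 0 <= x -> 0 <= y -> HF G x y <> PInf.

Lemma HF_Fin x y : 0 <= x -> 0 <= y -> HF G x y = Fin (Hreal x y).
Proof.
  intros hx hy. unfold Hreal. specialize (Hfin x y hx hy). destruct (HF G x y); simpl; tauto.
Qed.

Lemma Hreal_nonneg x y : 0 <= x -> 0 <= y -> 0 <= Hreal x y.
Proof.
  intros. destruct zero_lsc_minorant as [Hl Hm].
  pose proof (HF_ge_minorant _ x y Hl Hm) as H1. rewrite HF_Fin in H1 by auto. exact H1.
Qed.

Lemma Hreal_ge_of_box r1 r2 d c : 0 <= r1 -> 0 <= r2 -> 0 < d ->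
  (forall s1 s2, near_box r1 r2 d s1 s2 -> ele (Fin c) (Htilde G s1 s2)) -> c <= Hreal r1 r2.
Proof.
  intros Hr1 Hr2 Hd Hbox.
  destruct (Rle_dec c 0) as [Hc|Hc]; [pose proof (Hreal_nonneg r1 r2 Hr1 Hr2); lra|].
  assert (Hmin : forall q1 q2, 0 <= q1 -> 0 <= q2 ->
            ele (box_step r1 r2 d c q1 q2) (Htilde G q1 q2)).
  { intros q1 q2 Hq1 Hq2. unfold box_step.
    destruct (Rlt_dec (Rabs (q1 - r1)) d); [destruct (Rlt_dec (Rabs (q2 - r2)) d)|];
      try (apply Htilde_nonneg; auto).
    apply Hbox. repeat split; auto. }
  pose proof (HF_ge_minorant _ r1 r2 (box_step_lsc r1 r2 d c ltac:(lra)) Hmin) as Hle.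
  unfold box_step in Hle. rewrite !Rminus_diag, Rabs_R0, HF_Fin in Hle by auto.
  destruct (Rlt_dec 0 d); [exact Hle | lra].
Qed.

Lemma Hreal_lt_box r1 r2 eps : 0 <= r1 -> 0 <= r2 -> 0 < eps ->
  exists d, 0 < d /\ forall s1 s2, near_box r1 r2 d s1 s2 ->
    elt (Fin (Hreal r1 r2 - eps)) (Htilde G s1 s2).
Proof.
  intros Hr1 Hr2 He. apply NNPP. intro Hno.
  assert (Hle : ele (HF G r1 r2) (Fin (Hreal r1 r2 - eps))).
  { apply HF_le_of_bound. intros g Hg Hmin. apply enot_lt_le. intro Hlt.
    destruct (Hg r1 r2 Hr1 Hr2 _ Hlt) as [d [Hd Hball]].
    apply Hno. exists d; split; auto. intros s1 s2 [h1 [h2 [h3 h4]]].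
    exact (elt_ele_trans _ _ _ (Hball s1 s2 h1 h2 h3 h4) (Hmin s1 s2 h1 h2)). }
  rewrite HF_Fin in Hle by auto. simpl in Hle. lra.
Qed.

Lemma Hreal_le_Htilde r1 r2 : 0 <= r1 -> 0 <= r2 -> ele (Fin (Hreal r1 r2)) (Htilde G r1 r2).
Proof.
  intros Hr1 Hr2. destruct (Htilde G r1 r2) as [t|] eqn:Et; simpl; auto.
  apply Rle_plus_epsilon. intros eps He.
  destruct (Hreal_lt_box r1 r2 eps Hr1 Hr2 He) as [d [Hd Hbox]].
  specialize (Hbox r1 r2 (near_box_center r1 r2 d Hr1 Hr2 Hd)).
  rewrite Et, elt_Fin in Hbox. lra.
Qed.

Lemma Hreal_near_box r1 r2 d eps : 0 <= r1 -> 0 <= r2 -> 0 < d -> 0 < eps ->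
  exists s1 s2, near_box r1 r2 d s1 s2 /\ ele (Htilde G s1 s2) (Fin (Hreal r1 r2 + eps)).
Proof.
  intros Hr1 Hr2 Hd He. apply NNPP; intro Hno.
  assert (Hreal r1 r2 + eps <= Hreal r1 r2); [|lra].
  apply (Hreal_ge_of_box r1 r2 d); auto. intros s1 s2 Hs.
  destruct (ele_total (Fin (Hreal r1 r2 + eps)) (Htilde G s1 s2)) as [|Hle]; auto.
  exfalso; apply Hno; eauto.
Qed.

(* [Hreal] is the lower semicontinuous regularization of [Htilde], so a comparison of
   [Htilde] on neighbourhoods of two points passes to [Hreal] at the points. *)
Lemma Hreal_transfer r1 r2 r1' r2' k :
  0 <= r1 -> 0 <= r2 -> 0 <= r1' -> 0 <= r2' -> 0 < k ->
  (forall d, 0 < d -> exists d', 0 < d' /\ forall s1' s2', near_box r1' r2' d' s1' s2' ->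
     exists s1 s2, near_box r1 r2 d s1 s2 /\
       ele (escale k (Htilde G s1 s2)) (Htilde G s1' s2')) ->
  k * Hreal r1 r2 <= Hreal r1' r2'.
Proof.
  intros h1 h2 h3 h4 Hk Htr.
  cut (forall eps, 0 < eps -> k * (Hreal r1 r2 - eps) <= Hreal r1' r2').
  { intros Hc. apply Rle_plus_epsilon. intros eps He.
    specialize (Hc (eps / k) ltac:(apply Rdiv_lt_0_compat; lra)).
    replace (k * (Hreal r1 r2 - eps / k)) with (k * Hreal r1 r2 - eps) in Hc
      by (field; lra). lra. }
  intros eps He.
  destruct (Hreal_lt_box r1 r2 eps h1 h2 He) as [d [Hd Hlow]].
  destruct (Htr d Hd) as [d' [Hd' Hnear]].
  apply (Hreal_ge_of_box r1' r2' d'); auto. intros s1' s2' Hs'.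
  destruct (Hnear s1' s2' Hs') as [s1 [s2 [Hs Hle]]].
  apply (ele_trans _ (escale k (Htilde G s1 s2))); auto.
  specialize (Hlow s1 s2 Hs). destruct (Htilde G s1 s2) as [t|]; simpl; auto.
  apply elt_Fin in Hlow. nra.
Qed.

Lemma Hreal_sym x y : 0 <= x -> 0 <= y -> Hreal x y = Hreal y x.
Proof.
  assert (Hle : forall x y, 0 <= x -> 0 <= y -> Hreal x y <= Hreal y x).
  { intros x0 y0 h1 h2. rewrite <- (Rmult_1_l (Hreal x0 y0)).
    apply Hreal_transfer; auto; try lra.
    intros d Hd. exists d; split; auto. intros s1' s2' [a1 [a2 [a3 a4]]].
    exists s2', s1'. split; [repeat split; auto|].
    rewrite escale_1. apply Htilde_sym; auto. }
  intros. apply Rle_antisym; auto.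
Qed.

Lemma Hreal_scale_le t x y : 0 < t -> 0 <= x -> 0 <= y ->
  t * Hreal x y <= Hreal (t * x) (t * y).
Proof.
  intros Ht hx hy. apply Hreal_transfer; auto; try nra.
  intros d Hd. exists (t * d); split; [nra|]. intros s1' s2' [a1 [a2 [a3 a4]]].
  assert (Hdiv : forall s r, Rabs (s - t * r) < t * d -> Rabs (s / t - r) < d).
  { intros s r Hsr. replace (s / t - r) with ((s - t * r) / t) by (field; lra).
    unfold Rdiv; rewrite Rabs_mult, Rabs_inv, (Rabs_right t) by lra.
    apply (Rmult_lt_reg_r t); auto. rewrite Rmult_assoc, Rinv_l, Rmult_1_r by lra. lra. }
  assert (Hnn : forall s, 0 <= s -> 0 <= s / t).
  { intros s Hs. apply Rmult_le_pos; [lra | left; apply Rinv_0_lt_compat; lra]. }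
  exists (s1' / t), (s2' / t). split; [repeat split; auto|].
  pose proof (Htilde_scale G HG t (s1' / t) (s2' / t) Ht (Hnn _ a1) (Hnn _ a2)) as Hsc.
  replace (t * (s1' / t)) with s1' in Hsc by (field; lra).
  replace (t * (s2' / t)) with s2' in Hsc by (field; lra).
  exact Hsc.
Qed.

Lemma Hreal_scale t x y : 0 < t -> 0 <= x -> 0 <= y -> Hreal (t * x) (t * y) = t * Hreal x y.
Proof.
  intros Ht hx hy. apply Rle_antisym; [|apply Hreal_scale_le; auto].
  assert (Hti : 0 < / t) by (apply Rinv_0_lt_compat; lra).
  pose proof (Hreal_scale_le (/ t) (t * x) (t * y) Hti ltac:(nra) ltac:(nra)) as Hle.
  replace (/ t * (t * x)) with x in Hle by (field; lra).
  replace (/ t * (t * y)) with y in Hle by (field; lra).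
  apply (Rmult_le_reg_l (/ t)); auto.
  replace (/ t * (t * Hreal x y)) with (Hreal x y) by (field; lra). exact Hle.
Qed.

Lemma Hreal_0_0 : Hreal 0 0 = 0.
Proof.
  pose proof (Hreal_scale 2 0 0 ltac:(lra) ltac:(lra) ltac:(lra)) as E.
  rewrite Rmult_0_r in E. lra.
Qed.

Lemma Hreal_1_1 : Hreal 1 1 = 0.
Proof.
  pose proof (ele_trans _ _ _ (Hreal_le_Htilde 1 1 ltac:(lra) ltac:(lra)) (Htilde_1_1 G HG)).
  pose proof (Hreal_nonneg 1 1 ltac:(lra) ltac:(lra)). simpl in *. lra.
Qed.

Lemma Hreal_convex l p1 p2 q1 q2 : 0 < l < 1 -> 0 < p1 -> 0 < p2 -> 0 < q1 -> 0 < q2 ->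
  Hreal (l * p1 + (1 - l) * q1) (l * p2 + (1 - l) * q2)
  <= l * Hreal p1 p2 + (1 - l) * Hreal q1 q2.
(* Approximate [Hreal] at [p] and [q] by [Htilde] at nearby [s] and [t]; the combination
   of [s] and [t] is near [m], where [Htilde] stays above [Hreal m - eps / 2]. *)
Proof.
  intros Hl h1 h2 h3 h4. apply Rle_plus_epsilon. intros eps He.
  set (m1 := l * p1 + (1 - l) * q1). set (m2 := l * p2 + (1 - l) * q2).
  destruct (Hreal_lt_box m1 m2 (eps / 2) ltac:(unfold m1; nra) ltac:(unfold m2; nra)
              ltac:(lra)) as [d [Hd Hlow]].
  set (d0 := Rmin d (Rmin (Rmin p1 p2) (Rmin q1 q2))).
  assert (Hd0 : 0 < d0) by (unfold d0; repeat apply Rmin_glb_lt; auto).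
  assert (Hd0p : d0 <= d /\ d0 <= p1 /\ d0 <= p2 /\ d0 <= q1 /\ d0 <= q2).
  { pose proof (Rmin_l p1 p2); pose proof (Rmin_r p1 p2).
    pose proof (Rmin_l q1 q2); pose proof (Rmin_r q1 q2).
    pose proof (Rmin_l (Rmin p1 p2) (Rmin q1 q2)); pose proof (Rmin_r (Rmin p1 p2) (Rmin q1 q2)).
    pose proof (Rmin_l d (Rmin (Rmin p1 p2) (Rmin q1 q2))).
    pose proof (Rmin_r d (Rmin (Rmin p1 p2) (Rmin q1 q2))).
    unfold d0; lra. }
  destruct (Hreal_near_box p1 p2 d0 (eps / 2) ltac:(lra) ltac:(lra) Hd0 ltac:(lra))
    as [s1 [s2 [Hs Hs_up]]].
  destruct (Hreal_near_box q1 q2 d0 (eps / 2) ltac:(lra) ltac:(lra) Hd0 ltac:(lra))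
    as [t1 [t2 [Ht Ht_up]]].
  destruct (near_box_pos _ _ _ _ _ Hs ltac:(lra) ltac:(lra)) as [hs1 hs2].
  destruct (near_box_pos _ _ _ _ _ Ht ltac:(lra) ltac:(lra)) as [ht1 ht2].
  assert (Hw : near_box m1 m2 d (l * s1 + (1 - l) * t1) (l * s2 + (1 - l) * t2)).
  { assert (Hbox : forall r1 r2 u1 u2, near_box r1 r2 d0 u1 u2 -> near_box r1 r2 d u1 u2)
      by (intros r1 r2 u1 u2 [? [? [? ?]]]; repeat split; auto; lra).
    apply near_box_convex; auto. }
  pose proof (elt_ele_trans _ _ _ (Hlow _ _ Hw)
                (Htilde_convex G HG l s1 s2 t1 t2 Hl hs1 hs2 ht1 ht2)) as Hchain.
  destruct (Htilde G s1 s2) as [c1|], (Htilde G t1 t2) as [c2|]; simpl in Hs_up, Ht_up;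
    try contradiction.
  simpl in Hchain. apply elt_Fin in Hchain. nra.
Qed.

End Envelope.

Lemma Rle_of_forall_shrink x y : 0 <= x ->
  (forall d, 0 < d <= 1 / 2 -> (1 - d) * x <= y) -> x <= y.
Proof.
  intros Hx Hd. apply Rle_plus_epsilon. intros eps He.
  set (d := Rmin (1 / 2) (eps / (x + 1))).
  assert (Hd0 : 0 < d <= 1 / 2).
  { split; [apply Rmin_glb_lt; [lra | apply Rdiv_lt_0_compat; lra] | apply Rmin_l]. }
  assert (Hdx : d * x <= eps).
  { apply (Rle_trans _ (eps / (x + 1) * x)); [apply Rmult_le_compat_r; auto; apply Rmin_r|].
    apply (Rmult_le_reg_r (x + 1)); [lra|]. field_simplify; nra. }
  specialize (Hd d Hd0). nra.
Qed.

Section Monotonicity.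
Variable G : R -> ereal.
Hypothesis HG : Gamma0 G.
Hypothesis Hfin : forall x y, 0 <= x -> 0 <= y -> HF G x y <> PInf.
Notation Hreal := (Hreal G).

Lemma Hreal_hom x y : 0 <= x -> 0 < y -> Hreal x y = y * Hreal (x / y) 1.
Proof.
  intros hx hy.
  assert (0 <= x / y) by (apply Rmult_le_pos; [lra | left; apply Rinv_0_lt_compat; lra]).
  rewrite <- (Hreal_scale G HG Hfin y (x / y) 1) by lra.
  f_equal; field; lra.
Qed.

(* [u |-> Hreal u 1] is convex on [(0, 1]] and vanishes at [1]. *)
Lemma Hreal_antitone_pos u v : 0 < u -> u <= v -> v <= 1 -> Hreal v 1 <= Hreal u 1.
Proof.
  intros hu huv hv.
  destruct (Req_dec u v) as [->|Huv]; [lra|].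
  destruct (Req_dec v 1) as [->|hv1].
  { rewrite (Hreal_1_1 G HG Hfin). apply Hreal_nonneg; auto; lra. }
  set (l := (1 - v) / (1 - u)).
  assert (Hl : 0 < l < 1).
  { unfold l; split; [apply Rdiv_lt_0_compat; lra|].
    apply (Rmult_lt_reg_r (1 - u)); [lra|]. field_simplify; lra. }
  pose proof (Hreal_convex G HG Hfin l u 1 1 1 Hl hu ltac:(lra) ltac:(lra) ltac:(lra)) as Hc.
  replace (l * u + (1 - l) * 1) with v in Hc by (unfold l; field; lra).
  replace (l * 1 + (1 - l) * 1) with 1 in Hc by ring.
  rewrite (Hreal_1_1 G HG Hfin) in Hc.
  pose proof (Hreal_nonneg G HG Hfin u 1 ltac:(lra) ltac:(lra)). nra.
Qed.

(* Near [(0, 1)], points [(s1, s2)] with [s1 > 0] have [s1 / s2 <= v], so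
   [Htilde G s1 s2 >= s2 Hreal v 1]; [Htilde_0_ge] covers the points with [s1 = 0]. *)
Lemma Hreal_le_at_0 v : 0 < v -> v <= 1 -> Hreal v 1 <= Hreal 0 1.
Proof.
  intros hv hv1. apply Rle_of_forall_shrink; [apply Hreal_nonneg; auto; lra|].
  intros d0 Hd0. set (d1 := Rmin d0 (v / 2)).
  assert (Hd1 : 0 < d1 /\ d1 <= d0 /\ d1 <= v / 2).
  { unfold d1; repeat split; [apply Rmin_glb_lt; lra | apply Rmin_l | apply Rmin_r]. }
  set (c := (1 - d0) * Hreal v 1).
  assert (Hinterior : forall s1 s2, 0 < s1 -> near_box 0 1 d1 s1 s2 ->
            ele (Fin c) (Htilde G s1 s2)).
  { intros s1 s2 hs1 [_ [_ [a3 a4]]]. apply Rabs_def2 in a3, a4.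
    assert (hs2 : 0 < s2) by lra.
    eapply ele_trans; [|apply (Hreal_le_Htilde G HG Hfin); lra]. simpl.
    rewrite Hreal_hom by lra.
    assert (Hsv : s1 / s2 <= v).
    { apply (Rmult_le_reg_r s2); auto. field_simplify; nra. }
    pose proof (Hreal_antitone_pos (s1 / s2) v ltac:(apply Rdiv_lt_0_compat; lra) Hsv hv1).
    pose proof (Hreal_nonneg G HG Hfin v 1 ltac:(lra) ltac:(lra)).
    unfold c. nra. }
  apply (Hreal_ge_of_box G HG Hfin 0 1 d1); try lra.
  intros s1 s2 Hs. destruct (Rle_lt_or_eq_dec 0 s1 (proj1 Hs)) as [hs1|<-]; [auto|].
  destruct Hs as [_ [a2 [_ a4]]]. pose proof (Rabs_def2 _ _ a4).
  apply (Htilde_0_ge G HG s2 c d1); try lra.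
  intros s [hs hs']. apply Hinterior; auto.
  repeat split; try lra. rewrite Rminus_0_r, Rabs_right; lra.
Qed.

Lemma Hreal_antitone u v : 0 <= u -> u <= v -> v <= 1 -> Hreal v 1 <= Hreal u 1.
Proof.
  intros hu huv hv. destruct (Rle_lt_or_eq_dec 0 u hu) as [hu'|<-].
  - apply Hreal_antitone_pos; auto.
  - destruct (Rle_lt_or_eq_dec 0 v huv) as [hv'|<-]; [apply Hreal_le_at_0 | ]; lra.
Qed.

Lemma Hreal_le_first x y z : 0 <= y -> y <= x -> x <= z -> Hreal x z <= Hreal y z.
Proof.
  intros hy hyx hxz. destruct (Rle_lt_or_eq_dec 0 z ltac:(lra)) as [hz|<-].
  - rewrite !(Hreal_hom _ z) by lra. apply Rmult_le_compat_l; [lra|].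
    apply Hreal_antitone.
    + apply Rmult_le_pos; [lra | left; apply Rinv_0_lt_compat; lra].
    + apply Rmult_le_compat_r; [left; apply Rinv_0_lt_compat|]; lra.
    + apply (Rmult_le_reg_r z); auto. field_simplify; lra.
  - replace x with 0 by lra. replace y with 0 by lra. lra.
Qed.

Lemma Hreal_le_second x y z : 0 <= x -> x <= z -> z <= y -> Hreal x z <= Hreal x y.
Proof.
  intros hx hxz hzy. destruct (Rle_lt_or_eq_dec 0 z ltac:(lra)) as [hz|<-].
  - rewrite (Hreal_hom x z), (Hreal_hom x y) by lra.
    assert (Hxy : x / y <= x / z).
    { apply Rmult_le_compat_l; auto. apply Rinv_le_contravar; lra. }
    assert (Hxz : x / z <= 1) by (apply (Rmult_le_reg_r z); auto; field_simplify; lra).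
    assert (0 <= x / y) by (apply Rmult_le_pos; [lra | left; apply Rinv_0_lt_compat; lra]).
    pose proof (Hreal_antitone (x / y) (x / z) ltac:(auto) Hxy Hxz).
    pose proof (Hreal_nonneg G HG Hfin (x / z) 1 ltac:(lra) ltac:(lra)). nra.
  - replace x with 0 by lra. rewrite (Hreal_0_0 G HG Hfin). apply (Hreal_nonneg G HG Hfin); lra.
Qed.

End Monotonicity.

(** * Powers and the triangle inequality *)

Lemma rpow_nonneg x p : 0 <= rpow x p.
Proof. unfold rpow. destruct (Rle_dec x 0); [lra | left; apply exp_pos]. Qed.

Lemma rpow_0_l p : rpow 0 p = 0.
Proof. unfold rpow. destruct (Rle_dec 0 0); lra. Qed.

Lemma rpow_Rpower x p : 0 < x -> rpow x p = Rpower x p.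
Proof. intros. unfold rpow. destruct (Rle_dec x 0); [lra | auto]. Qed.

Lemma rpow_pos x p : 0 < x -> 0 < rpow x p.
Proof. intros. rewrite rpow_Rpower by auto. apply exp_pos. Qed.

Lemma rpow_le_compat x y p : 0 <= x <= y -> 0 < p -> rpow x p <= rpow y p.
Proof.
  intros [h1 h2] hp. destruct (Rle_lt_or_eq_dec 0 x h1) as [hx|<-].
  - rewrite !rpow_Rpower by lra. apply Rle_Rpower_l; lra.
  - rewrite rpow_0_l. apply rpow_nonneg.
Qed.

Lemma rpow_mult_distr x y p : 0 <= x -> 0 <= y -> rpow (x * y) p = rpow x p * rpow y p.
Proof.
  intros hx hy. destruct (Rle_lt_or_eq_dec 0 x hx) as [hx'|<-].
  2:{ rewrite Rmult_0_l, rpow_0_l; ring. }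
  destruct (Rle_lt_or_eq_dec 0 y hy) as [hy'|<-].
  2:{ rewrite Rmult_0_r, rpow_0_l; ring. }
  rewrite !rpow_Rpower by nra. symmetry; apply Rpower_mult_distr; auto.
Qed.

Lemma rpow_lt_1 x p : 0 <= x < 1 -> 0 < p -> rpow x p < 1.
Proof.
  intros [h1 h2] hp. destruct (Rle_lt_or_eq_dec 0 x h1) as [hx|<-].
  - rewrite rpow_Rpower by lra.
    replace 1 with (Rpower 1 p) by (unfold Rpower; rewrite ln_1, Rmult_0_r, exp_0; auto).
    apply Rlt_Rpower_l; lra.
  - rewrite rpow_0_l; lra.
Qed.

Lemma rpow_rpow_inv b a : 0 < b -> 0 < a -> rpow (rpow b (1 / a)) a = b.
Proof.
  intros hb ha. rewrite (rpow_Rpower b), rpow_Rpower by (auto; apply exp_pos).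
  rewrite Rpower_mult. replace (1 / a * a) with 1 by (field; lra). apply Rpower_1; auto.
Qed.

Section Triangle.
Variable G : R -> ereal.
Variable a : R.
Hypothesis HG : Gamma0 G.
Hypothesis Hfin : forall x y, 0 <= x -> 0 <= y -> HF G x y <> PInf.
Hypothesis Hpos : forall u, 0 <= u < 1 -> elt (Fin 0) (HF G u 1).
Hypothesis Ha : 0 < a <= 1.
Hypothesis Hh : forall u v, 0 <= u -> u <= v -> v < 1 ->
  rpow (1 - rpow v a) (1 / a) / ereal_real (HF G v 1)
  <= rpow (1 - rpow u a) (1 / a) / ereal_real (HF G u 1).

Definition Hpow (x y : R) : R := rpow (Hreal G x y) a.

Lemma Hreal_pos u : 0 <= u < 1 -> 0 < Hreal G u 1.
Proof.
  intros hu. specialize (Hpos u hu). rewrite (HF_Fin G Hfin), elt_Fin in Hpos by lra.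
  exact Hpos.
Qed.

Lemma Hpow_unit x y : 0 <= x -> 0 < y -> Hpow x y = rpow y a * Hpow (x / y) 1.
Proof.
  intros hx hy.
  assert (0 <= x / y) by (apply Rmult_le_pos; [|left; apply Rinv_0_lt_compat]; lra).
  unfold Hpow. rewrite (Hreal_hom G HG Hfin x y hx hy).
  apply rpow_mult_distr; [lra | apply (Hreal_nonneg G HG Hfin); lra].
Qed.

(* The monotonicity of [h] after cross-multiplying and raising to the power [a]. *)
Lemma Hpow_cross u v : 0 <= u -> u <= v -> v < 1 ->
  (1 - rpow v a) * Hpow u 1 <= (1 - rpow u a) * Hpow v 1.
Proof.
  intros hu huv hv. specialize (Hh u v hu huv hv). fold (Hreal G v 1) (Hreal G u 1) in Hh.
  pose proof (Hreal_pos u ltac:(lra)) as Fu. pose proof (Hreal_pos v ltac:(lra)) as Fv.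
  pose proof (rpow_lt_1 u a ltac:(lra) ltac:(lra)).
  pose proof (rpow_lt_1 v a ltac:(lra) ltac:(lra)).
  set (Au := rpow (1 - rpow u a) (1 / a)) in *.
  set (Av := rpow (1 - rpow v a) (1 / a)) in *.
  assert (Hcross : Av * Hreal G u 1 <= Au * Hreal G v 1).
  { apply (Rmult_le_compat_r (Hreal G u 1 * Hreal G v 1)) in Hh; [|nra].
    replace (Av / Hreal G v 1 * (Hreal G u 1 * Hreal G v 1)) with (Av * Hreal G u 1) in Hh
      by (field; lra).
    replace (Au / Hreal G u 1 * (Hreal G u 1 * Hreal G v 1)) with (Au * Hreal G v 1) in Hh
      by (field; lra).
    exact Hh. }
  assert (Hnn : 0 <= Av * Hreal G u 1) by (assert (0 <= Av) by apply rpow_nonneg; nra).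
  pose proof (rpow_le_compat _ _ a (conj Hnn Hcross) ltac:(lra)) as Hpowered.
  unfold Hpow. rewrite !rpow_mult_distr in Hpowered by (try apply rpow_nonneg; lra).
  unfold Au, Av in Hpowered. rewrite !rpow_rpow_inv in Hpowered by lra. exact Hpowered.
Qed.

(* With [w = u / v], [u^a = w^a v^a]; adding the cross inequalities at [(u, v)] and
   [v] times the one at [(u, w)] gives [(1 - u^a)] times the claim. *)
Lemma Hpow_split u v : 0 <= u -> u < v -> v < 1 ->
  Hpow u 1 <= rpow v a * Hpow (u / v) 1 + Hpow v 1.
Proof.
  intros hu huv hv1. assert (hv : 0 < v) by lra.
  assert (Huw : u <= u / v).
  { apply (Rmult_le_reg_r v); auto. unfold Rdiv; rewrite Rmult_assoc, Rinv_l by lra. nra. }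
  assert (Hw1 : u / v < 1).
  { apply (Rmult_lt_reg_r v); auto. unfold Rdiv; rewrite Rmult_assoc, Rinv_l by lra. nra. }
  pose proof (Hpow_cross u v hu ltac:(lra) hv1) as Cv.
  pose proof (Hpow_cross u (u / v) hu Huw Hw1) as Cw.
  assert (HU : rpow u a = rpow (u / v) a * rpow v a).
  { rewrite <- rpow_mult_distr by lra. f_equal; field; lra. }
  pose proof (rpow_pos v a hv). pose proof (rpow_lt_1 u a ltac:(lra) ltac:(lra)).
  pose proof (rpow_nonneg (Hreal G u 1) a). fold (Hpow u 1) in *.
  set (U := rpow u a) in *. set (V := rpow v a) in *. set (W := rpow (u / v) a) in *.
  apply (Rmult_le_reg_l (1 - U)); [lra|].
  apply (Rmult_le_compat_l V) in Cw; [|lra]. nra.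
Qed.

Lemma Hpow_triangle_ordered x y z : 0 <= x -> 0 <= y -> x <= z ->
  Hpow x z <= Hpow x y + Hpow y z.
Proof.
  intros hx hy hxz.
  pose proof (rpow_nonneg (Hreal G x y) a). pose proof (rpow_nonneg (Hreal G y z) a).
  unfold Hpow in *.
  destruct (Rle_dec y x) as [hyx|hxy]; [|destruct (Rle_dec z y) as [hzy|hyz]].
  - pose proof (Hreal_le_first G HG Hfin x y z hy hyx hxz).
    pose proof (rpow_le_compat (Hreal G x z) (Hreal G y z) a).
    pose proof (Hreal_nonneg G HG Hfin x z hx ltac:(lra)). lra.
  - pose proof (Hreal_le_second G HG Hfin x y z hx hxz hzy).
    pose proof (rpow_le_compat (Hreal G x z) (Hreal G x y) a).
    pose proof (Hreal_nonneg G HG Hfin x z hx ltac:(lra)). lra.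
  - fold (Hpow x z) (Hpow x y) (Hpow y z).
    assert (hz : 0 < z) by lra.
    assert (hv : 0 <= y / z) by (apply Rmult_le_pos; [|left; apply Rinv_0_lt_compat]; lra).
    pose proof (Hpow_split (x / z) (y / z)
      ltac:(apply Rmult_le_pos; [|left; apply Rinv_0_lt_compat]; lra)
      ltac:(apply Rmult_lt_compat_r; [apply Rinv_0_lt_compat|]; lra)
      ltac:(apply (Rmult_lt_reg_r z); auto; unfold Rdiv; rewrite Rmult_assoc, Rinv_l; lra))
      as Hsplit.
    replace (x / z / (y / z)) with (x / y) in Hsplit by (field; lra).
    rewrite (Hpow_unit x z), (Hpow_unit x y), (Hpow_unit y z) by lra.
    assert (Ey : rpow y a = rpow (y / z) a * rpow z a).
    { rewrite <- rpow_mult_distr by lra. f_equal; field; lra. }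
    rewrite Ey.
    pose proof (rpow_nonneg z a).
    apply (Rmult_le_compat_l (rpow z a)) in Hsplit; auto. nra.
Qed.

End Triangle.

Theorem mainTheorem2 (G : R -> ereal) (a : R) :
  Gamma0 G ->
  (forall x y, 0 <= x -> 0 <= y -> HF G x y <> PInf) ->
  (forall u, 0 <= u < 1 -> elt (Fin 0) (HF G u 1)) ->
  0 < a <= 1 ->
  (forall u v, 0 <= u -> u <= v -> v < 1 ->
     rpow (1 - rpow v a) (1 / a) / ereal_real (HF G v 1)
     <= rpow (1 - rpow u a) (1 / a) / ereal_real (HF G u 1)) ->
  forall x y z, 0 <= x -> 0 <= y -> 0 <= z ->
    rpow (ereal_real (HF G x z)) a
    <= rpow (ereal_real (HF G x y)) a + rpow (ereal_real (HF G y z)) a.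
Proof.
  intros HG Hfin Hpos Ha Hh x y z hx hy hz.
  change (Hpow G a x z <= Hpow G a x y + Hpow G a y z).
  destruct (Rle_dec x z) as [hxz|hzx].
  - apply Hpow_triangle_ordered; auto.
  - unfold Hpow. rewrite (Hreal_sym G HG Hfin x z), (Hreal_sym G HG Hfin x y),
      (Hreal_sym G HG Hfin y z) by auto.
    pose proof (Hpow_triangle_ordered G a HG Hfin Hpos Ha Hh z y x hz hy ltac:(lra)).
    unfold Hpow in *. lra.
Qed.
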